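(* For every $n\geq 2$, $\deg(\chi:\{0,1\}^n\to\{0,1\}^n)=3/2$.
   Context: For finite sets $X,Y$ and $f:X\to Y$, $\deg(f)=\frac{1}{|X|}\sum_{y\in Y}|f^{-1}(y)|^2$. Identify $w=w_1\cdots w_n\in\{0,1\}^n$ with a configuration of chips on a path with vertices $1,\dots,n$ (vertex $i$ holds $w_i$ chips); this is the unwrapping of a cycle with $n+1$ vertices, where the extra vertex is a sink adjacent to both vertex $1$ (the source) and vertex $n$. Firing: whenever a vertex holds at least $2$ chips, it sends one chip to each of its two neighbors in the cycle; chips sent to the sink disappear (so an endpoint vertex of the path sends one chip to its path neighbor and loses one chip). Firings are repeated until every vertex holds $0$ or $1$ chip (the final configuration does not depend on the order of firings). Define $\chi(w)$ to be the stable configuration obtained by adding one chip to vertex $1$ of the configuration $w$ and then firing until stable. For example, with $n=3$, $\chi(110)=101$. *)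

From mathcomp Require Import all_boot all_order all_algebra.
Set Implicit Arguments. Unset Strict Implicit. Unset Printing Implicit Defensive.
Import GRing.Theory Num.Theory.
Local Open Scope ring_scope.

Definition deg (X Y : finType) (f : X -> Y) : rat :=
  (\sum_(y : Y) (#|[set x | f x == y]| ^ 2)%N%:R) / (#|X|%:R).

(* Chip configurations on the path 1..n (0-indexed here) as seq nat.
   Firing vertex i: it loses 2 chips, each path neighbour gains one;
   chips sent past the ends go to the sink and disappear. *)
Definition fire (c : seq nat) (i : nat) : seq nat :=
  [seq ((if j == i then nth 0%N c j - 2 else nth 0%N c j)
        + ((j.+1 == i) || (j == i.+1)))%N | j <- iota 0 (size c)].

Definition step (c : seq nat) : seq nat :=
  let i := find (fun k => 1 < k)%N c in
  if (i < size c)%N then fire c i else c.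

(* Fuel: the total number of firings during stabilization is at most
   n(n+1)^2/4 < (n+2)^4; stable configurations are fixed points of step. *)
Definition stabilize (n : nat) (c : seq nat) : seq nat :=
  iter ((n + 2) ^ 4) step c.

Definition chi (n : nat) (w : n.-tuple bool) : n.-tuple bool :=
  let c0 := incr_nth [seq nat_of_bool b | b <- w] 0 in
  let s := stabilize n c0 in
  [tuple (nth 0%N s i != 0%N) | i < n].

Example stabilize_example :
  stabilize 3 (incr_nth [:: 1; 1; 0]%N 0) = [:: 1; 0; 1]%N.
Proof. vm_compute. reflexivity. Qed.

From mathcomp Require Import all_boot all_order all_algebra ring.

(* Adding a chip to the source of [0 v] just fills vertex 1, while adding it
   to [1 v] fires vertex 1 and sends a hole travelling right through the
   leading run of ones of [v].  This gives the recursion [chi (0 v) = 1 v] and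
   [chi (1 v) = v_1 chi v] (with [v_1 = 0] for empty [v]).  Hence [chi] is
   injective on words with a given first letter, and [chi (1 v) = chi (0 u)]
   exactly when [v] starts with [1] and [u = chi v].  So among the pairs
   [(x, y)] with [chi x = chi y] there are [2^n] diagonal ones and
   [2 * 2^(n-2)] others, and [deg chi = (2^n + 2^(n-1)) / 2^n = 3/2]. *)

Import GRing.Theory Num.Theory.

Lemma sum_card_preimage_sq (X Y : finType) (f : X -> Y) :
  \sum_(y : Y) #|[set x | f x == y]| ^ 2 = \sum_(x : X) \sum_(x' : X) (f x == f x').
Proof.
have card_preimage y : #|[set x | f x == y]| = \sum_(x : X) (f x == y).
  by rewrite -sum1_card big_mkcond; apply: eq_bigr => x _; rewrite inE; case: eqP.
under eq_bigr => y _ do rewrite card_preimage -mulnn big_distrl /=.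
under eq_bigr => y _ do under eq_bigr => x _ do rewrite big_distrr /=.
rewrite exchange_big /=; apply: eq_bigr => x _.
rewrite exchange_big /=; apply: eq_bigr => x' _.
rewrite (bigD1 (f x)) //= eqxx mul1n big1 ?addn0; first by rewrite eq_sym.
by move=> y /negbTE; rewrite eq_sym => ->.
Qed.

Lemma big_tuple_cons R (idx : R) (op : Monoid.com_law idx) (T : finType) k
    (F : k.+1.-tuple T -> R) :
  \big[op/idx]_(t : k.+1.-tuple T) F t =
  \big[op/idx]_(x : T) \big[op/idx]_(t : k.-tuple T) F [tuple of x :: t].
Proof.
rewrite pair_big (reindex (fun p : T * k.-tuple T => [tuple of p.1 :: p.2])) //.
exists (fun t => (thead t, [tuple of behead t])) => [[x t] _|t _].
  by congr (_, _); apply: val_inj.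
by rewrite [RHS]tuple_eta.
Qed.

Lemma sum_tuple_eq (T : finType) k (s : seq T) :
  size s = k -> \sum_(t : k.-tuple T) (val t == s) = 1.
Proof.
move=> /eqP size_s; rewrite (bigD1 (Tuple size_s)) //= eqxx big1 // => t.
by rewrite -val_eqE /= => /negbTE ->.
Qed.

(* The chip that the last vertex sends to the right is lost in the sink. *)
Definition incr_head (c : seq nat) : seq nat :=
  if c is x :: c' then x.+1 :: c' else [::].

Definition stable (c : seq nat) : bool := all (fun k => k <= 1) c.

Lemma stable_bool (s : seq bool) : stable (map nat_of_bool s).
Proof. by apply/allP => _ /mapP[b _ ->]; apply: leq_b1. Qed.

Lemma step_stable c : stable c -> step c = c.
Proof.
move=> c_stable; rewrite /step -has_find.
by case: hasP => // -[k /(allP c_stable)]; rewrite leqNgt => /negbTE ->.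
Qed.

Lemma iter_step_stable m c : stable c -> iter m step c = c.
Proof. by move=> c_stable; elim: m => //= m ->; apply: step_stable. Qed.

Lemma fire_cons0 x c : fire (x :: c) 0 = (x - 2) :: incr_head c.
Proof.
rewrite /fire /= -[1]/(1 + 0) iotaDl -map_comp addn0; congr (_ :: _).
case: c => [|y c] //=; rewrite -[1]/(1 + 0) iotaDl -map_comp addn1.
by congr (_ :: _); rewrite -[RHS](mkseq_nth 0); apply: eq_map => j /=; rewrite addn0.
Qed.

Lemma fire_consS x c i : fire (x :: c) i.+1 = (x + (i == 0)) :: fire c i.
Proof.
rewrite /fire /= -[1]/(1 + 0) iotaDl -map_comp eqSS [0 == i]eq_sym orbF.
by congr (_ :: _); apply: eq_map.
Qed.

Lemma step_cons2 c : step (2 :: c) = 0 :: incr_head c.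
Proof. by rewrite /step /= fire_cons0. Qed.

Local Notation ones a := (nseq a 1).

Lemma fire_hole a r :
  fire (ones a ++ 0 :: 2 :: r) a.+1 = ones a.+1 ++ 0 :: incr_head r.
Proof.
elim: a => [|a IH]; first by rewrite /= fire_consS fire_cons0.
by rewrite /= fire_consS IH.
Qed.

Lemma step_hole a r :
  step (ones a ++ 0 :: 2 :: r) = ones a.+1 ++ 0 :: incr_head r.
Proof.
rewrite /step find_cat has_nseq andbF size_nseq /= addn1.
by rewrite size_cat size_nseq /= addnS ltnS addnS ltnS leq_addr fire_hole.
Qed.

Fixpoint chi_seq (w : seq bool) : seq bool :=
  match w with
  | [::] => [::]
  | false :: v => true :: v
  | true :: v => head false v :: chi_seq v
  end.

Lemma size_chi_seq w : size (chi_seq w) = size w.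
Proof. by elim: w => [|[] w IH] //=; rewrite IH. Qed.

Lemma iter_step_hole N a v : size v <= N ->
  iter N step (ones a ++ 0 :: incr_head (map nat_of_bool v)) =
  map nat_of_bool (nseq a true ++ chi_seq (true :: v)).
Proof.
elim: v N a => [|[] v IH] N a v_le.
- rewrite iter_step_stable ?map_cat ?map_nseq //.
  by rewrite /stable all_cat all_nseq orbT.
- case: N v_le => // N v_le; rewrite iterSr /= step_hole IH //.
  by rewrite -[a.+1]addn1 nseqD -catA.
- rewrite iter_step_stable /= ?map_cat ?map_nseq //.
  by rewrite /stable all_cat all_nseq orbT /=; apply: stable_bool.
Qed.

Lemma iter_step_add_chip N w : 0 < size w <= N ->
  iter N step (incr_nth (map nat_of_bool w) 0) = map nat_of_bool (chi_seq w).
Proof.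
case: w => [//|[] v] /= v_lt.
- by case: N v_lt => // N v_lt; rewrite iterSr step_cons2 (iter_step_hole _ 0).
- by rewrite iter_step_stable //; apply: (stable_bool (true :: v)).
Qed.

Lemma stabilize_add_chip w : 0 < size w ->
  stabilize (size w) (incr_nth (map nat_of_bool w) 0) = map nat_of_bool (chi_seq w).
Proof.
move=> w_gt0; apply: iter_step_add_chip; rewrite w_gt0 /=.
by rewrite (leq_trans (leq_addr 2 _)) // -{1}[_ + 2]expn1 leq_pexp2l ?addn_gt0 ?orbT.
Qed.

Lemma chiE n (w : n.-tuple bool) : val (chi w) = chi_seq w.
Proof.
apply: (@eq_from_nth _ false) => [|i]; first by rewrite size_tuple size_chi_seq size_tuple.
rewrite size_tuple => lt_i_n; rewrite (nth_mktuple _ _ (Ordinal lt_i_n)) /=.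
have := @stabilize_add_chip w; rewrite size_tuple => -> //; last exact: leq_ltn_trans (leq0n i) lt_i_n.
by rewrite (nth_map false) ?size_chi_seq ?size_tuple //; case: nth.
Qed.

Lemma chi_seq_inj_head s t :
  head false s = head false t -> chi_seq s = chi_seq t -> s = t.
Proof.
elim: s t => [|[] s IH] [|[] t] //= eq_head; try by case=> ->.
by case=> eq_head' /(IH _ eq_head') ->.
Qed.

Lemma eq_chi_seq s t :
  (chi_seq s == chi_seq t) =
  (s == t) + ((head false s != head false t) && (chi_seq s == chi_seq t)) :> nat.
Proof.
have [eq_head|neq_head] := eqVneq (head false s) (head false t).
  have [->|neq_st] := eqVneq s t; first by rewrite eqxx.
  by case: eqP => // /(chi_seq_inj_head _ _ eq_head) /eqP; rewrite (negbTE neq_st).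
have [eq_st|] := eqVneq s t; last by [].
by move: neq_head; rewrite eq_st eqxx.
Qed.

Lemma chi_seq_true_false v u :
  (chi_seq (true :: v) == chi_seq (false :: u)) = head false v && (u == chi_seq v).
Proof. by rewrite /= eqseq_cons eq_sym [u == _]eq_sym. Qed.

(* So that [/=], needed to normalize [big_bool], leaves [chi_seq] folded. *)
Arguments chi_seq : simpl never.

Lemma sum_head_tuple k : \sum_(t : k.+1.-tuple bool) head false t = 2 ^ k.
Proof.
by rewrite big_tuple_cons big_bool /= big1_eq addn0 sum1_card card_tuple card_bool.
Qed.

Lemma sum_chi_seq_true_false k (x : k.+1.-tuple bool) :
  \sum_(t : k.+1.-tuple bool) (chi_seq (true :: x) == chi_seq (false :: t)) =
  head false x.
Proof.
under eq_bigr => t _ do rewrite chi_seq_true_false.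
case: (head false x) => /=; last exact: big1_eq.
by apply: sum_tuple_eq; rewrite size_chi_seq size_tuple.
Qed.

Lemma sum_chi_seq_cross_collisions k :
  \sum_(x : k.+2.-tuple bool) \sum_(y : k.+2.-tuple bool)
    ((head false x != head false y) && (chi_seq x == chi_seq y)) = 2 ^ k.+1.
Proof.
rewrite big_tuple_cons big_bool /=.
under eq_bigr => x _ do
  rewrite big_tuple_cons big_bool /= big1_eq add0n sum_chi_seq_true_false.
under [X in _ + X]eq_bigr => x _ do rewrite big_tuple_cons big_bool /= big1_eq addn0.
rewrite exchange_big /=.
under [X in _ + X]eq_bigr => t _ do under eq_bigr => x _ do rewrite eq_sym.
under [X in _ + X]eq_bigr => t _ do rewrite sum_chi_seq_true_false.
by rewrite sum_head_tuple addnn -mul2n expnS.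
Qed.

Lemma sum_chi_seq_collisions k :
  \sum_(x : k.+2.-tuple bool) \sum_(y : k.+2.-tuple bool) (chi_seq x == chi_seq y) =
  3 * 2 ^ k.+1.
Proof.
under eq_bigr => x _ do under eq_bigr => y _ do rewrite eq_chi_seq [val x == _]eq_sym.
under eq_bigr => x _ do rewrite big_split /= sum_tuple_eq ?size_tuple //.
rewrite big_split /= sum_chi_seq_cross_collisions.
by rewrite sum1_card card_tuple card_bool expnS mulSn addnC.
Qed.

Theorem mainTheorem13 (n : nat) (hn : (2 <= n)%N) :
  deg (@chi n) = (3%:R / 2%:R)%R.
Proof.
rewrite /deg -natr_sum sum_card_preimage_sq.
under eq_bigr => x _ do under eq_bigr => y _ do rewrite -val_eqE !chiE.
case: n hn => [|[|k]] // _.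
rewrite sum_chi_seq_collisions card_tuple card_bool (expnS 2 k.+1) !(natrM _ 2) natrM.
set m := ((2 ^ k.+1)%:R : rat)%R.
have m_neq0 : (m != 0)%R by rewrite pnatr_eq0 expn_eq0.
by field.
Qed.
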